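(* Consider spin-1 operators on $\mathbb{C}^3$ (basis $\ket{+1},\ket{0},\ket{-1}$) and the twelve matrices $\pm S^x,\pm S^y,\pm S^z,\pm S^{\tilde x},\pm S^{\tilde y},\pm S^{\tilde z}$, where $S^x=\tfrac{1}{\sqrt2}\begin{pmatrix}0&1&0\\1&0&1\\0&1&0\end{pmatrix}$, $S^{\tilde x}=\tfrac{1}{\sqrt2}\begin{pmatrix}0&1&0\\1&0&-1\\0&-1&0\end{pmatrix}$, $S^y=\tfrac{1}{\sqrt2}\begin{pmatrix}0&-i&0\\i&0&-i\\0&i&0\end{pmatrix}$, $S^{\tilde y}=\tfrac{1}{\sqrt2}\begin{pmatrix}0&-i&0\\i&0&i\\0&-i&0\end{pmatrix}$, $S^z=\mathrm{diag}(1,0,-1)$, $S^{\tilde z}=\begin{pmatrix}0&0&-i\\0&0&0\\i&0&0\end{pmatrix}$. Each of these twelve matrices $F$ is unitarily similar to $S^z$; choose for each a unitary $U_F$ with $U_F^\dagger S^z U_F=F$. Let $$H=\sum_i\big[h_iS_i^z+D_i(S_i^z)^2\big]+\sum_{i\ne j}J_{ij}\Big[S_i^zS_j^z-\tfrac12 H^{XY,0+}_{ij}-\tfrac12 H^{XY,0-}_{ij}\Big]$$ on $(\mathbb{C}^3)^{\otimes n}$ with arbitrary real $h_i,D_i$ and real symmetric $J_{ij}$, where $H^{XY,0\pm}_{ij}=\ket{\pm1,0}\bra{0,\pm1}_{ij}+\mathrm{h.c.}$. Then $$\frac{1}{12}\sum_{F}(U_F^\dagger)^{\otimes n}H\,U_F^{\otimes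 n}=\frac{2}{3}\Big(\sum_i D_i\Big)\mathbb{1},$$ i.e. spending equal time in the twelve frames decouples both on-site disorder and the dipolar interaction (the result is independent of the choice of $U_F$). Moreover, each of the two sets $\{S^x,S^y,S^z\}$ and $\{S^{\tilde x},S^{\tilde y},S^{\tilde z}\}$ satisfies $\hat S_1^2+\hat S_2^2+\hat S_3^2=2\,\mathbb{1}$.
   Context: The frame associated with a control unitary $U$ is $U^\dagger S^z U$; by secularity of $H$ (it commutes with $D^{\otimes n}$ for every unitary $D$ diagonal in the $S^z$ basis), the transformed Hamiltonian $(U^\dagger)^{\otimes n}HU^{\otimes n}$ depends only on the frame. $J_{ij}$ summed over ordered pairs $i\neq j$. *)

(* complex numbers are modelled by algC (algebraic complex
   numbers, a numClosedFieldType with conjugation, 'i and sqrtC). *)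
From mathcomp Require Import all_boot all_order all_algebra all_field.
Set Implicit Arguments. Unset Strict Implicit. Unset Printing Implicit Defensive.
Import Order.TTheory GRing.Theory Num.Theory.
Local Open Scope ring_scope.

(* Single-site (spin-1) matrices, basis order: index 0 = |+1>, 1 = |0>, 2 = |-1>. *)
Definition mk3 (a00 a01 a02 a10 a11 a12 a20 a21 a22 : algC) : 'M[algC]_3 :=
  \matrix_(i < 3, j < 3)
    nth 0 (nth [::] [:: [:: a00; a01; a02]; [:: a10; a11; a12]; [:: a20; a21; a22]] i) j.

Definition r2 : algC := (sqrtC 2)^-1.

Definition Sx  : 'M[algC]_3 := mk3 0 r2 0  r2 0 r2  0 r2 0.
Definition Sxt : 'M[algC]_3 := mk3 0 r2 0  r2 0 (- r2)  0 (- r2) 0.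
Definition Sy  : 'M[algC]_3 :=
  mk3 0 (- 'i * r2) 0  ('i * r2) 0 (- 'i * r2)  0 ('i * r2) 0.
Definition Syt : 'M[algC]_3 :=
  mk3 0 (- 'i * r2) 0  ('i * r2) 0 ('i * r2)  0 (- 'i * r2) 0.
Definition Sz  : 'M[algC]_3 := mk3 1 0 0  0 0 0  0 0 (-1).
Definition Szt : 'M[algC]_3 := mk3 0 0 (- 'i)  0 0 0  'i 0 0.

Definition frames : seq 'M[algC]_3 :=
  [:: Sx; - Sx; Sy; - Sy; Sz; - Sz; Sxt; - Sxt; Syt; - Syt; Szt; - Szt].
Definition Fr (k : 'I_12) : 'M[algC]_3 := nth 0 frames k.

Definition dagger (U : 'M[algC]_3) : 'M[algC]_3 := (map_mx (fun x => x^*) U)^T.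
Definition unitary (U : 'M[algC]_3) : Prop := dagger U *m U = 1%:M.

(* Operators on (C^3)^{(x) n}: matrices indexed by basis configurations. *)
Definition cfg (n : nat) := {ffun 'I_n -> 'I_3}.
Definition Op (n : nat) := cfg n -> cfg n -> algC.

Definition opmul n (A B : Op n) : Op n := fun s t => \sum_(u : cfg n) A s u * B u t.
Definition opid n : Op n := fun s t => (s == t)%:R.

Definition tens n (U : 'M[algC]_3) : Op n := fun s t => \prod_(i < n) U (s i) (t i).

Definition site1 n (i : 'I_n) (A : 'M[algC]_3) : Op n :=
  fun s t => A (s i) (t i) * [forall k, (k != i) ==> (s k == t k)]%:R.

(* two-site operator B acting on sites (i, j), B a b c d = <a,b| B |c,d> *)
Definition site2 n (i j : 'I_n) (B : 'I_3 -> 'I_3 -> 'I_3 -> 'I_3 -> algC) : Op n :=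
  fun s t => B (s i) (s j) (t i) (t j)
             * [forall k, ((k != i) && (k != j)) ==> (s k == t k)]%:R.

(* H^{XY,0 pm} = |pm1,0><0,pm1| + h.c.; x = 0 for +1, x = 2 for -1 *)
Definition hxy (x : nat) (a b c d : 'I_3) : algC :=
  [&& a == x :> nat, b == 1%N :> nat, c == 1%N :> nat & d == x :> nat]%:R
  + [&& a == 1%N :> nat, b == x :> nat, c == x :> nat & d == 1%N :> nat]%:R.

Definition Ham n (h D : 'I_n -> algC) (J : 'I_n -> 'I_n -> algC) : Op n :=
  fun s t =>
    \sum_(i < n) (h i * site1 i Sz s t + D i * site1 i (Sz *m Sz) s t)
  + \sum_(i < n) \sum_(j < n | j != i)
      J i j * (opmul (site1 i Sz) (site1 j Sz) s t
               - 2^-1 * site2 i j (hxy 0) s t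
               - 2^-1 * site2 i j (hxy 2) s t).

Definition frameH n (U : 'M[algC]_3) (H : Op n) : Op n :=
  opmul (opmul (@tens n (dagger U)) H) (@tens n U).

From mathcomp Require Import all_boot all_order all_algebra all_field.
From mathcomp Require Import ring.
From Stdlib Require Import FunctionalExtensionality.
Import Order.TTheory GRing.Theory Num.Theory.
Local Open Scope ring_scope.
Set Implicit Arguments. Unset Strict Implicit. Unset Printing Implicit Defensive.

(** The Hamiltonian is a linear combination of product
    operators [prodOp M = (x)_k M k] whose factors are the identity except at
    one or two sites.  Conjugation by [U^{(x)n}] is linear and acts factorwise
    on product operators, so in the frame of a unitary [U] every single-site
    matrix [A] is replaced by [conjU U A = U^dagger A U].  Writing
    [F = conjU U Sz], the on-site terms become [h F + D F^2], and the pair term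
    at sites [(i, j)] becomes the quadratic form [pairForm F]: the XY hopping
    terms factor through [|+1><+1| + |-1><-1| = Sz^2] and [|0><0| = 1 - Sz^2].
    Hence averaging over any family of frames with [sum F = 0],
    [sum F^2 = c 1] and [sum pairForm F = 0] leaves [c (sum_i D_i) 1]
    ([frame_average]).  The twelve frames [+-S^a] satisfy these moment
    identities with [c = 8] (the second one follows from the spin identities
    [S1^2 + S2^2 + S3^2 = 2]), and each frame is realised by an explicit
    unitary ([frames_realizable]); the main theorem is then immediate. *)

Ltac case_I3 i := let Hi := fresh "H" in case: i => [[|[|[|i]]] Hi] //.

Lemma mk3E a00 a01 a02 a10 a11 a12 a20 a21 a22 (i j : 'I_3) :
  mk3 a00 a01 a02 a10 a11 a12 a20 a21 a22 i j =
  match val i, val j with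
  | 0, 0 => a00 | 0, 1 => a01 | 0, _ => a02
  | 1, 0 => a10 | 1, 1 => a11 | 1, _ => a12
  | _, 0 => a20 | _, 1 => a21 | _, _ => a22 end.
Proof. by rewrite /mk3 mxE; case_I3 i; case_I3 j. Qed.

(** The ring operations, the scalar matrices and [dagger] act on the nine
    entries; together with [mk3_congr] they reduce any identity between
    explicit 3x3 matrices to nine scalar identities. *)
Lemma mk3_mul a00 a01 a02 a10 a11 a12 a20 a21 a22
              b00 b01 b02 b10 b11 b12 b20 b21 b22 :
  mk3 a00 a01 a02 a10 a11 a12 a20 a21 a22 *m mk3 b00 b01 b02 b10 b11 b12 b20 b21 b22 =
  mk3 (a00*b00+a01*b10+a02*b20) (a00*b01+a01*b11+a02*b21) (a00*b02+a01*b12+a02*b22)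
      (a10*b00+a11*b10+a12*b20) (a10*b01+a11*b11+a12*b21) (a10*b02+a11*b12+a12*b22)
      (a20*b00+a21*b10+a22*b20) (a20*b01+a21*b11+a22*b21) (a20*b02+a21*b12+a22*b22).
Proof.
apply/matrixP => i j; rewrite [RHS]mk3E mxE !big_ord_recr big_ord0 /= !mk3E add0r.
by case_I3 i; case_I3 j.
Qed.

Lemma mk3_add a00 a01 a02 a10 a11 a12 a20 a21 a22
              b00 b01 b02 b10 b11 b12 b20 b21 b22 :
  mk3 a00 a01 a02 a10 a11 a12 a20 a21 a22 + mk3 b00 b01 b02 b10 b11 b12 b20 b21 b22 =
  mk3 (a00+b00) (a01+b01) (a02+b02) (a10+b10) (a11+b11) (a12+b12)
      (a20+b20) (a21+b21) (a22+b22).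
Proof. by apply/matrixP => i j; rewrite [RHS]mk3E mxE !mk3E; case_I3 i; case_I3 j. Qed.

Lemma mk3_opp a00 a01 a02 a10 a11 a12 a20 a21 a22 :
  - mk3 a00 a01 a02 a10 a11 a12 a20 a21 a22 =
  mk3 (-a00) (-a01) (-a02) (-a10) (-a11) (-a12) (-a20) (-a21) (-a22).
Proof. by apply/matrixP => i j; rewrite [RHS]mk3E mxE !mk3E; case_I3 i; case_I3 j. Qed.

Lemma mk3_scalar (a : algC) : a%:M = mk3 a 0 0 0 a 0 0 0 a.
Proof. by apply/matrixP => i j; rewrite [RHS]mk3E mxE; case_I3 i; case_I3 j. Qed.

Lemma dagger_mk3 a00 a01 a02 a10 a11 a12 a20 a21 a22 :
  dagger (mk3 a00 a01 a02 a10 a11 a12 a20 a21 a22) =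
  mk3 a00^* a10^* a20^* a01^* a11^* a21^* a02^* a12^* a22^*.
Proof.
by apply/matrixP => i j; rewrite [RHS]mk3E /dagger mxE mxE mk3E; case_I3 i; case_I3 j.
Qed.

Lemma mk3_congr a00 a01 a02 a10 a11 a12 a20 a21 a22
                b00 b01 b02 b10 b11 b12 b20 b21 b22 :
  a00 = b00 -> a01 = b01 -> a02 = b02 -> a10 = b10 -> a11 = b11 -> a12 = b12 ->
  a20 = b20 -> a21 = b21 -> a22 = b22 ->
  mk3 a00 a01 a02 a10 a11 a12 a20 a21 a22 = mk3 b00 b01 b02 b10 b11 b12 b20 b21 b22.
Proof. by move=> -> -> -> -> -> -> -> -> ->. Qed.

(** The scalars [sqrt 2] and ['i] enter the computations only through these
    relations, which [algC_field] feeds to the [field] tactic. *)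

Lemma sqrt2_sq : sqrtC 2 * sqrtC 2 = 2 :> algC.
Proof. by rewrite -expr2 sqrtCK. Qed.

Lemma sqrt2_neq0 : sqrtC 2 != 0 :> algC.
Proof. by rewrite sqrtC_eq0 pnatr_eq0. Qed.

Lemma i_sq : 'i * 'i = -1 :> algC.
Proof. by rewrite -expr2 sqrCi. Qed.

Lemma conj_r2 : r2^* = r2.
Proof. by apply: geC0_conj; rewrite /r2 invr_ge0 sqrtC_ge0 ler0n. Qed.

Lemma conjC_mul (x y : algC) : (x * y)^* = x^* * y^*.
Proof. exact: rmorphM. Qed.

Lemma conjC_opp (x : algC) : (- x)^* = - x^*.
Proof. exact: rmorphN. Qed.

Ltac algC_field := rewrite ?/r2; field: sqrt2_sq i_sq; by [| exact: sqrt2_neq0].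

Ltac mk3_solve :=
  rewrite ?dagger_mk3 ?mk3_scalar ?mk3_opp !mk3_mul ?mk3_add ?mk3_opp;
  rewrite ?(conjC_mul, conjC_opp, conjCi, conj_r2, conjC0, conjC1);
  match goal with |- ?A = ?B => change (@eq 'M[algC]_3 A B) end;
  apply: mk3_congr; algC_field.

Lemma spin_sq_sum : Sx *m Sx + Sy *m Sy + Sz *m Sz = 2%:M.
Proof. rewrite /Sx /Sy /Sz; mk3_solve. Qed.

Lemma spin_tilde_sq_sum : Sxt *m Sxt + Syt *m Syt + Szt *m Szt = 2%:M.
Proof. rewrite /Sxt /Syt /Szt; mk3_solve. Qed.

Definition realizable (F : 'M[algC]_3) : Prop :=
  exists U : 'M[algC]_3, unitary U /\ dagger U *m Sz *m U = F.

Lemma dagger_mul (A B : 'M[algC]_3) : dagger (A *m B) = dagger B *m dagger A.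
Proof. by rewrite /dagger map_mxM trmx_mul. Qed.

(** The permutation [|+1> <-> |-1>], which reverses [Sz]; composing with
    it turns a unitary realising [F] into one realising [-F]. *)
Definition flip : 'M[algC]_3 := mk3 0 0 1  0 1 0  1 0 0.

Lemma flip_unitary : unitary flip.
Proof. rewrite /unitary /flip; mk3_solve. Qed.

Lemma flip_Sz : dagger flip *m Sz *m flip = - Sz.
Proof. rewrite /flip /Sz; mk3_solve. Qed.

Lemma realizable_opp F : realizable F -> realizable (- F).
Proof.
case=> U [HU HF]; exists (flip *m U); rewrite /unitary !dagger_mul; split.
  by rewrite mulmxA -(mulmxA _ _ flip) flip_unitary mulmx1.
by rewrite !mulmxA -(mulmxA _ _ Sz) -(mulmxA _ _ flip) flip_Sz mulmxN mulNmx HF.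
Qed.

Ltac realize_with U := rewrite /realizable; exists U; rewrite /unitary; split; mk3_solve.

Lemma realizable_Sz : realizable Sz.
Proof.
by exists 1%:M; split; rewrite /unitary /dagger map_mx1 trmx1 ?mulmx1 ?mul1mx.
Qed.

Lemma realizable_Sx : realizable Sx.
Proof. rewrite /Sx /Sz; realize_with (mk3 (r2*r2) r2 (r2*r2)  r2 0 (-r2)  (r2*r2) (-r2) (r2*r2)). Qed.

Lemma realizable_Sy : realizable Sy.
Proof.
rewrite /Sy /Sz.
realize_with (mk3 (r2*r2) (-'i*r2) (-(r2*r2))  r2 0 r2  (r2*r2) ('i*r2) (-(r2*r2))).
Qed.

Lemma realizable_Sxt : realizable Sxt.
Proof.
rewrite /Sxt /Sz.
realize_with (mk3 (r2*r2) r2 (-(r2*r2))  r2 0 r2  (r2*r2) (-r2) (-(r2*r2))).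
Qed.

Lemma realizable_Syt : realizable Syt.
Proof.
rewrite /Syt /Sz.
realize_with (mk3 (r2*r2) (-'i*r2) (r2*r2)  r2 0 (-r2)  (r2*r2) ('i*r2) (r2*r2)).
Qed.

Lemma realizable_Szt : realizable Szt.
Proof. rewrite /Szt /Sz; realize_with (mk3 r2 0 (-'i*r2)  0 1 0  r2 0 ('i*r2)). Qed.

Lemma frames_realizable (k : 'I_12) : realizable (Fr k).
Proof.
case: k => [[|[|[|[|[|[|[|[|[|[|[|[|k]]]]]]]]]]]] Hk] //; rewrite /Fr /=;
  do ?[ exact: realizable_Sx | exact: realizable_Sy | exact: realizable_Sz
      | exact: realizable_Sxt | exact: realizable_Syt | exact: realizable_Szt
      | apply: realizable_opp ].
Qed.

(** * Moments of the twelve frames *)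

(** The frames come in opposite pairs, so their first moment vanishes. *)
Lemma frames_sum : \sum_(k < 12) Fr k = 0.
Proof. by rewrite !big_ord_recr big_ord0 /= /Fr /= add0r !addrK subrr. Qed.

(** The second moment is [8]: each spin identity contributes twice. *)
Lemma frames_sq_sum : \sum_(k < 12) Fr k *m Fr k = 8%:M.
Proof.
transitivity ((Sx *m Sx + Sy *m Sy + Sz *m Sz) *+ 2
              + (Sxt *m Sxt + Syt *m Syt + Szt *m Szt) *+ 2).
  rewrite !big_ord_recr big_ord0 /= /Fr /= !mulNmx !mulmxN !opprK.
  by apply/matrixP => i j; rewrite !mxE; ring.
rewrite spin_sq_sum spin_tilde_sq_sum.
by apply/matrixP => i j; rewrite !mxE; case: (_ == _); rewrite /= ?mulr1n ?mulr0n; ring.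
Qed.

(** The matrix element [<p r| . |q s>] of the frame image of the pair
    term [S^z S^z - (1/2) H^{XY,0+} - (1/2) H^{XY,0-}] when the frame is
    [F = U^dagger S^z U] (see [xy_conj_sum]). *)
Definition pairForm (F : 'M[algC]_3) (p q r s : 'I_3) : algC :=
  F p q * F r s - 2^-1 * ((F *m F) p s * (1%:M - F *m F) r q
                          + (1%:M - F *m F) p s * (F *m F) r q).

Lemma pairForm_opp F p q r s : pairForm (- F) p q r s = pairForm F p q r s.
Proof. by rewrite /pairForm mulNmx mulmxN opprK !mxE mulrNN. Qed.

Lemma frames_pairForm_sum p q r s : \sum_(k < 12) pairForm (Fr k) p q r s = 0.
Proof.
rewrite !big_ord_recr big_ord0 /= /Fr /= !pairForm_opp /pairForm.
rewrite /Sx /Sy /Sz /Sxt /Syt /Szt !mk3_mul !mk3_scalar !mk3_opp !mk3_add !mk3E.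
by case_I3 p; case_I3 q; case_I3 r; case_I3 s; rewrite /=; algC_field.
Qed.

(** * Product operators and frame conjugation *)

Lemma op_ext n (A B : Op n) : (forall s t, A s t = B s t) -> A = B.
Proof. by move=> AB; do 2![apply: functional_extensionality => ?]; exact: AB. Qed.

Definition prodOp n (M : 'I_n -> 'M[algC]_3) : Op n :=
  fun s t => \prod_(k < n) M k (s k) (t k).

(** Product operators multiply factorwise (distributivity of the product
    over the sum on intermediate configurations). *)
Lemma prodOp_mul n (M N : 'I_n -> 'M[algC]_3) :
  opmul (prodOp M) (prodOp N) = prodOp (fun k => M k *m N k).
Proof.
apply: op_ext => s t; rewrite /opmul /prodOp.
under eq_bigr => u _ do rewrite -big_split /=.
rewrite -(bigA_distr_bigA (fun k j => M k (s k) j * N k j (t k))).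
by apply: eq_bigr => k _; rewrite mxE.
Qed.

Definition conjU (U A : 'M[algC]_3) : 'M[algC]_3 := dagger U *m A *m U.

(** Hence the frame of a product operator is the product of the frames of
    its factors, since [U^{(x)n}] is itself a product operator. *)
Lemma frameH_prodOp n U (M : 'I_n -> 'M[algC]_3) :
  frameH U (prodOp M) = prodOp (fun k => conjU U (M k)).
Proof.
by rewrite /frameH -[@tens _ (dagger U)]/(prodOp _) -[@tens _ U]/(prodOp _) !prodOp_mul.
Qed.

(** The frame map is linear: it is given by a fixed kernel. *)
Lemma frameHE n U (X : Op n) s t :
  frameH U X s t = \sum_v \sum_u @tens n (dagger U) s u * X u v * @tens n U v t.
Proof. by rewrite /frameH /opmul; apply: eq_bigr => v _; rewrite big_distrl. Qed.

Lemma frameH_add n U (A B : Op n) :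
  frameH U (fun s t => A s t + B s t) = fun s t => frameH U A s t + frameH U B s t.
Proof.
apply: op_ext => s t; rewrite !frameHE -big_split; apply: eq_bigr => v _.
by rewrite -big_split; apply: eq_bigr => u _; rewrite mulrDr mulrDl.
Qed.

Lemma frameH_sub n U (A B : Op n) :
  frameH U (fun s t => A s t - B s t) = fun s t => frameH U A s t - frameH U B s t.
Proof.
apply: op_ext => s t; rewrite !frameHE -sumrB; apply: eq_bigr => v _.
by rewrite -sumrB; apply: eq_bigr => u _; rewrite mulrBr mulrBl.
Qed.

Lemma frameH_scale n U c (A : Op n) :
  frameH U (fun s t => c * A s t) = fun s t => c * frameH U A s t.
Proof.
apply: op_ext => s t; rewrite !frameHE big_distrr; apply: eq_bigr => v _.
by rewrite big_distrr; apply: eq_bigr => u _ /=; ring.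
Qed.

Lemma frameH_sum n U (I : Type) (r : seq I) (P : pred I) (G : I -> Op n) :
  frameH U (fun s t => \sum_(x <- r | P x) G x s t) =
  fun s t => \sum_(x <- r | P x) frameH U (G x) s t.
Proof.
apply: op_ext => s t; rewrite frameHE.
under eq_bigr => v _ do (under eq_bigr => u _ do
  rewrite mulr_sumr mulr_suml; rewrite exchange_big /=).
by rewrite exchange_big /=; apply: eq_bigr => x _; rewrite frameHE.
Qed.

(** * The Hamiltonian as a combination of product operators *)

Definition plus1 : 'I_3 := @Ordinal 3 0 isT.
Definition zero : 'I_3 := @Ordinal 3 1 isT.
Definition minus1 : 'I_3 := @Ordinal 3 2 isT.

Definition onsite n (i : 'I_n) (A : 'M[algC]_3) : 'I_n -> 'M[algC]_3 :=
  fun k => if k == i then A else 1%:M.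
Definition onpair n (i j : 'I_n) (A B : 'M[algC]_3) : 'I_n -> 'M[algC]_3 :=
  fun k => if k == i then A else if k == j then B else 1%:M.

Definition agree_off1 n (i : 'I_n) (s t : cfg n) : algC :=
  [forall k, (k != i) ==> (s k == t k)]%:R.
Definition agree_off2 n (i j : 'I_n) (s t : cfg n) : algC :=
  [forall k, ((k != i) && (k != j)) ==> (s k == t k)]%:R.

Lemma prod_id_entries n (P : pred 'I_n) (s t : cfg n) :
  \prod_(k | P k) (1%:M : 'M[algC]_3) (s k) (t k) = [forall k, P k ==> (s k == t k)]%:R.
Proof.
case: (boolP [forall k, _]) => H.
  rewrite big1 // => k Pk; rewrite mxE.
  by move/forallP: H => /(_ k); rewrite Pk /= => /eqP ->; rewrite eqxx.
move: H; rewrite negb_forall => /existsP [k]; rewrite negb_imply => /andP [Pk Hk].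
by rewrite (bigD1 k) //= mxE (negbTE Hk) mul0r.
Qed.

Lemma prodOp_onsite n (i : 'I_n) A s t :
  prodOp (onsite i A) s t = A (s i) (t i) * agree_off1 i s t.
Proof.
rewrite /prodOp (bigD1 i) //= /onsite eqxx /agree_off1 -prod_id_entries.
by congr (_ * _); apply: eq_bigr => k /negbTE ->.
Qed.

Lemma prodOp_onpair n (i j : 'I_n) A B s t : j != i ->
  prodOp (onpair i j A B) s t = A (s i) (t i) * B (s j) (t j) * agree_off2 i j s t.
Proof.
move=> ji; rewrite /prodOp (bigD1 i) //= (bigD1 j) //= /onpair eqxx (negbTE ji) eqxx.
rewrite mulrA /agree_off2 -prod_id_entries; congr (_ * _).
by apply: eq_bigr => k /andP [/negbTE -> /negbTE ->].
Qed.

Lemma site1_prodOp n (i : 'I_n) A : site1 i A = prodOp (onsite i A).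
Proof. by apply: op_ext => s t; rewrite prodOp_onsite. Qed.

Lemma onsite_mul n (i j : 'I_n) A B : j != i ->
  (fun k => onsite i A k *m onsite j B k) = onpair i j A B.
Proof.
move=> ji; apply: functional_extensionality => k; rewrite /onsite /onpair.
case: (eqVneq k i) => [->|_]; first by rewrite eq_sym (negbTE ji) mulmx1.
by case: (k == j); rewrite ?mul1mx ?mulmx1.
Qed.

(** The hopping term [|x,0><0,x| + |0,x><x,0|] at sites [(i, j)], with every
    single-site matrix unit passed through [phi] ([phi = id] is the term
    itself, [phi = conjU U] its frame). *)
Definition xyPair n (i j : 'I_n) (phi : 'M[algC]_3 -> 'M[algC]_3) (x : 'I_3) : Op n :=
  fun s t => prodOp (onpair i j (phi (delta_mx x zero)) (phi (delta_mx zero x))) s t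
           + prodOp (onpair i j (phi (delta_mx zero x)) (phi (delta_mx x zero))) s t.

Lemma site2_hxy n (i j : 'I_n) (x : 'I_3) s t : j != i ->
  site2 i j (hxy x) s t = xyPair i j id x s t.
Proof.
move=> ji; rewrite /xyPair !prodOp_onpair // /site2 -mulrDl; congr (_ * _).
rewrite /hxy !mxE -!natrM !mulnb -!val_eqE /=.
by congr (_%:R + _%:R); rewrite -!andbA; congr (_ && _); exact: andbCA.
Qed.

Definition HamProd n (phi : 'M[algC]_3 -> 'M[algC]_3)
    (h D : 'I_n -> algC) (J : 'I_n -> 'I_n -> algC) : Op n :=
  fun s t =>
    \sum_(i < n) (h i * prodOp (onsite i (phi Sz)) s t
                  + D i * prodOp (onsite i (phi (Sz *m Sz))) s t)
  + \sum_(i < n) \sum_(j < n | j != i)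
      J i j * (prodOp (onpair i j (phi Sz) (phi Sz)) s t
               - 2^-1 * \sum_(x <- [:: plus1; minus1]) xyPair i j phi x s t).

Lemma Ham_prod n (h D : 'I_n -> algC) J : Ham h D J = HamProd id h D J.
Proof.
apply: op_ext => s t; rewrite /Ham /HamProd; congr (_ + _).
  by apply: eq_bigr => i _; rewrite !site1_prodOp.
apply: eq_bigr => i _; apply: eq_bigr => j ji; congr (_ * _).
rewrite !site1_prodOp prodOp_mul onsite_mul // !big_cons big_nil.
by rewrite (site2_hxy plus1) // (site2_hxy minus1) //; ring.
Qed.

(** Identity factors are frame invariant, so the frame of a local operator
    is local with conjugated factors. *)
Lemma conjU1 U : unitary U -> conjU U 1%:M = 1%:M.
Proof. by rewrite /conjU mulmx1. Qed.

Lemma frameH_onsite n U (i : 'I_n) A : unitary U ->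
  frameH U (prodOp (onsite i A)) = prodOp (onsite i (conjU U A)).
Proof.
move=> HU; rewrite frameH_prodOp; congr prodOp.
by apply: functional_extensionality => k; rewrite /onsite; case: (k == i); rewrite ?conjU1.
Qed.

Lemma frameH_onpair n U (i j : 'I_n) A B : unitary U ->
  frameH U (prodOp (onpair i j A B)) = prodOp (onpair i j (conjU U A) (conjU U B)).
Proof.
move=> HU; rewrite frameH_prodOp; congr prodOp.
apply: functional_extensionality => k; rewrite /onpair.
by case: (k == i); case: (k == j); rewrite ?conjU1.
Qed.

Lemma frameH_xyPair n U (i j : 'I_n) phi x : unitary U ->
  frameH U (xyPair i j phi x) = xyPair i j (fun A => conjU U (phi A)) x.
Proof. by move=> HU; rewrite /xyPair frameH_add !frameH_onpair. Qed.

Lemma frameH_HamProd n U phi (h D : 'I_n -> algC) J : unitary U ->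
  frameH U (HamProd phi h D J) = HamProd (fun A => conjU U (phi A)) h D J.
Proof.
move=> HU; rewrite /HamProd frameH_add !frameH_sum; apply: op_ext => s t.
congr (_ + _); apply: eq_bigr => i _.
  by rewrite frameH_add !frameH_scale !frameH_onsite.
rewrite frameH_sum; apply: eq_bigr => j _.
rewrite frameH_scale frameH_sub frameH_scale frameH_sum frameH_onpair //.
by under eq_bigr => x _ do rewrite frameH_xyPair //.
Qed.

Lemma frameH_Ham n U (h D : 'I_n -> algC) J : unitary U ->
  frameH U (Ham h D J) = HamProd (conjU U) h D J.
Proof. by move=> HU; rewrite Ham_prod frameH_HamProd. Qed.

Lemma conjU_mul U A B : unitary U -> conjU U A *m conjU U B = conjU U (A *m B).
Proof.
move=> HU; have UUd : U *m dagger U = 1%:M by exact: mulmx1C.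
by rewrite /conjU !mulmxA -(mulmxA _ U) UUd mulmx1 -!mulmxA.
Qed.

Lemma conjU_delta U (a c p q : 'I_3) :
  conjU U (delta_mx a c) p q = (U a p)^* * U c q.
Proof.
have mul_delta (A : 'M[algC]_3) x : (A *m delta_mx a c) p x = A p a * (x == c)%:R.
  rewrite mxE (bigD1 a) //= big1 ?addr0 => [|y /negbTE ya]; rewrite mxE.
    by rewrite eqxx.
  by rewrite ya mulr0.
rewrite /conjU mxE (bigD1 c) //= big1 ?addr0 => [|x /negbTE xc]; rewrite mul_delta.
  by rewrite eqxx mulr1 /dagger !mxE.
by rewrite xc mulr0 mul0r.
Qed.

Lemma Sz_sq_delta : Sz *m Sz = delta_mx plus1 plus1 + delta_mx minus1 minus1.
Proof.
rewrite /Sz mk3_mul; apply/matrixP => i j; rewrite mk3E !mxE.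
by case_I3 i; case_I3 j; rewrite /=; ring.
Qed.

Lemma id_delta :
  1%:M = delta_mx plus1 plus1 + delta_mx zero zero + delta_mx minus1 minus1 :> 'M[algC]_3.
Proof.
apply/matrixP => i j; rewrite !mxE.
by case_I3 i; case_I3 j; rewrite /= ?addr0 ?add0r.
Qed.

Lemma xy_conj_sum U p q r s : unitary U ->
  let F := conjU U Sz in
  \sum_(x <- [:: plus1; minus1])
     (conjU U (delta_mx x zero) p q * conjU U (delta_mx zero x) r s
      + conjU U (delta_mx zero x) p q * conjU U (delta_mx x zero) r s)
  = (F *m F) p s * (1%:M - F *m F) r q + (1%:M - F *m F) p s * (F *m F) r q.
Proof.
move=> HU F.
have conjU_add A B : conjU U (A + B) = conjU U A + conjU U B.
  by rewrite /conjU mulmxDr mulmxDl.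
have Fsq : F *m F = conjU U (Sz *m Sz) by exact: conjU_mul.
have Fcompl : 1%:M - F *m F = conjU U (delta_mx zero zero).
  rewrite Fsq Sz_sq_delta -{1}(conjU1 HU) id_delta !conjU_add.
  by apply/matrixP => a b; rewrite !mxE; ring.
have entryD (A B : 'M[algC]_3) a b : (A + B) a b = A a b + B a b by rewrite mxE.
rewrite !big_cons big_nil Fcompl Fsq Sz_sq_delta conjU_add !entryD !conjU_delta.
ring.
Qed.

(** Matrix elements of the Hamiltonian in the frame of [U]: they depend on
    [U] only through [F = U^dagger Sz U]. *)
Lemma frameHam_eval n U (h D : 'I_n -> algC) J s t : unitary U ->
  let F := conjU U Sz in
  HamProd (conjU U) h D J s t =
  \sum_(i < n) (h i * F (s i) (t i) + D i * (F *m F) (s i) (t i)) * agree_off1 i s t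
  + \sum_(i < n) \sum_(j < n | j != i)
      J i j * (pairForm F (s i) (t i) (s j) (t j) * agree_off2 i j s t).
Proof.
move=> HU F; rewrite /HamProd; congr (_ + _).
  apply: eq_bigr => i _.
  by rewrite !prodOp_onsite -conjU_mul // mulrDl !mulrA.
apply: eq_bigr => i _; apply: eq_bigr => j ji; congr (_ * _).
have := xy_conj_sum (s i) (t i) (s j) (t j) HU; rewrite /= -/F => xyE.
rewrite /pairForm -xyE /xyPair !big_cons !big_nil !prodOp_onpair //.
ring.
Qed.

(** * Averaging over frames *)

Lemma agree_off1_opid n (i : 'I_n) (s t : cfg n) :
  (1%:M : 'M[algC]_3) (s i) (t i) * agree_off1 i s t = opid s t.
Proof.
transitivity (\prod_(k < n) (1%:M : 'M[algC]_3) (s k) (t k)).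
  by rewrite (bigD1 i) //= /agree_off1 prod_id_entries.
rewrite prod_id_entries /opid; congr (_%:R); congr (nat_of_bool _).
apply/forallP/eqP => [st|-> k]; last by rewrite eqxx.
by apply/ffunP => k; apply/eqP; exact: st.
Qed.

Lemma frame_average n (I : finType) (U : I -> 'M[algC]_3) (c : algC)
    (h D : 'I_n -> algC) J :
  (forall k, unitary (U k)) ->
  \sum_k conjU (U k) Sz = 0 ->
  \sum_k (conjU (U k) Sz *m conjU (U k) Sz) = c%:M ->
  (forall p q r s, \sum_k pairForm (conjU (U k) Sz) p q r s = 0) ->
  forall s t, \sum_k frameH (U k) (Ham h D J) s t = c * (\sum_i D i) * opid s t.
Proof.
move=> HU sumF sumF2 sumPair s t.
under eq_bigr => k _ do rewrite frameH_Ham // frameHam_eval //.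
rewrite big_split /=.
have pair0 : \sum_k \sum_(i < n) \sum_(j < n | j != i) J i j *
    (pairForm (conjU (U k) Sz) (s i) (t i) (s j) (t j) * agree_off2 i j s t) = 0.
  rewrite exchange_big big1 // => i _; rewrite exchange_big big1 // => j _.
  by rewrite -mulr_sumr -mulr_suml sumPair mul0r mulr0.
rewrite pair0 addr0 exchange_big mulr_sumr mulr_suml; apply: eq_bigr => i _.
rewrite -mulr_suml big_split /= -!mulr_sumr -!summxE sumF sumF2.
by rewrite -(agree_off1_opid i) !mxE mulr0 add0r -mulr_natr; ring.
Qed.

Theorem mainTheorem4 :
  (forall k : 'I_12, exists U : 'M[algC]_3, unitary U /\ dagger U *m Sz *m U = Fr k)
  /\
  (forall (n : nat) (h D : 'I_n -> algC) (J : 'I_n -> 'I_n -> algC)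
          (U : 'I_12 -> 'M[algC]_3),
     (forall i, h i \is Num.real) -> (forall i, D i \is Num.real) ->
     (forall i j, J i j \is Num.real) -> (forall i j, J i j = J j i) ->
     (forall k, unitary (U k) /\ dagger (U k) *m Sz *m U k = Fr k) ->
     (fun s t => 12^-1 * \sum_(k < 12) frameH (U k) (Ham h D J) s t)
     = (fun s t => 2 / 3 * (\sum_(i < n) D i) * @opid n s t))
  /\ Sx *m Sx + Sy *m Sy + Sz *m Sz = 2%:M
  /\ Sxt *m Sxt + Syt *m Syt + Szt *m Szt = 2%:M.
Proof.
split; first exact: frames_realizable.
split; last by split; [exact: spin_sq_sum | exact: spin_tilde_sq_sum].
move=> n h D J U _ _ _ _ HU; apply: op_ext => s t /=.
have frameU k : conjU (U k) Sz = Fr k by case: (HU k).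
rewrite (@frame_average _ _ U 8) => [|k|||]; first by field.
- by case: (HU k).
- by under eq_bigr => k _ do rewrite frameU; exact: frames_sum.
- by under eq_bigr => k _ do rewrite frameU; exact: frames_sq_sum.
- by move=> p q r s'; under eq_bigr => k _ do rewrite frameU; exact: frames_pairForm_sum.
Qed.
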